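(* Let $R$ be a bounded dominant region of $\mathcal A^m_\Phi$ and let $w_R\in W_a$ be the unique element with $r(w_R,\alpha)=r_\alpha(\phi(R))$ for all $\alpha\in\Phi^+$. Then $w_R$ is the unique $w\in W_a$ such that $wA_\circ\subseteq R$ and, whenever $\alpha\in\Phi^+$, $r\in\mathbb Z$ and $(\alpha,x)>r$ holds for some $x\in R$, we have $(\alpha,x)>r$ for all $x\in wA_\circ$.
   Context: $\Phi$ irreducible crystallographic of rank $\ell$ in Euclidean $V$, positive system $\Phi^+$, simple roots $\Pi=\{\sigma_i\}$, highest root $\tilde\alpha$, $m\ge1$. $\mathcal A^m_\Phi$: hyperplanes $H_{\alpha,k}=\{x:(\alpha,x)=k\}$, $\alpha\in\Phi$, $0\le k\le m$; dominant: inside $\{x:(\alpha,x)>0\ \forall\alpha\in\Phi^+\}$. $W_a$: group generated by reflections in all $H_{\alpha,k}$, $k\in\mathbb Z$; $A_\circ=\{x:(\sigma_i,x)>0,\ (\tilde\alpha,x)<1\}$; $r(w,\alpha)$ is the integer $r$ with $r-1<(\alpha,x)<r$ on $wA_\circ$. $\phi(R)$ is the chain $\emptyset=\mathcal J_0\subseteq\cdots\subseteq\mathcal J_m$ with $\mathcal J_r=\{\alpha\in\Phi^+:(\alpha,x)<r \text{ on } R\}$, which is a positive geometric chain of ideals (ideals in the root poset with $(\mathcal J_i+\mathcal J_j)\cap\Phi^+\subseteq\mathcal J_{i+j}$ for $i+j\le m$, the complements $\mathcal I_i$ satisfying $(\mathcal I_i+\mathcal I_j)\cap\Phi^+\subseteq\mathcal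 I_{i+j}$ with $\mathcal I_i=\mathcal I_m$ for $i>m$, and $\Pi\subseteq\mathcal J_m$). For such a chain, $r_\alpha(\mathcal J)=\min\{r_1+\dots+r_k:\alpha=\alpha_1+\dots+\alpha_k,\ \alpha_i\in\mathcal J_{r_i}\}$; there is a unique $w\in W_a$ with $r(w,\alpha)=r_\alpha(\mathcal J)$ for all $\alpha\in\Phi^+$. *)

From HB Require Import structures.
From mathcomp Require Import all_boot all_order all_algebra.
From mathcomp Require Import reals.

Set Implicit Arguments.
Unset Strict Implicit.
Unset Printing Implicit Defensive.

Import Order.TTheory GRing.Theory Num.Theory.
Local Open Scope ring_scope.

Section RootSystems.
Variables (R : realType) (n : nat).
Notation V := 'rV[R]_n.

Definition dotv (u v : V) : R := \sum_(i < n) u 0 i * v 0 i.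

Definition aff_refl (alpha : V) (k : R) (x : V) : V :=
  x - ((2 * (dotv alpha x - k)) / dotv alpha alpha) *: alpha.

Definition root_system (Phi : seq V) : Prop :=
  [/\ (0 : V) \notin Phi,
      row_full (\matrix_(i < size Phi) nth 0 Phi i),
      (forall a b, a \in Phi -> b \in Phi -> aff_refl a 0 b \in Phi),
      (forall a b, a \in Phi -> b \in Phi ->
         exists z : int, 2 * dotv a b / dotv a a = z%:~R) &
      (forall a (c : R), a \in Phi -> c *: a \in Phi -> c = 1 \/ c = -1)].

(* Irreducible: Phi nonempty and not a union of two nonempty orthogonal parts. *)
Definition irreducible_rs (Phi : seq V) : Prop :=
  Phi != [::] /\
  forall P : V -> Prop,
    (exists2 a, a \in Phi & P a) -> (exists2 b, b \in Phi & ~ P b) ->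
    exists a b, [/\ a \in Phi, b \in Phi, P a, ~ P b & dotv a b != 0].

Definition simple_system (Phi : seq V) (Pi : 'I_n -> V) : Prop :=
  [/\ (forall i, Pi i \in Phi),
      row_free (\matrix_(i < n) Pi i) &
      (forall a, a \in Phi -> exists c : 'I_n -> int,
         a = \sum_(i < n) (c i)%:~R *: Pi i /\
         ((forall i, 0 <= c i) \/ (forall i, c i <= 0)))].

Definition nonneg_comb (Pi : 'I_n -> V) (v : V) : Prop :=
  exists c : 'I_n -> nat, v = \sum_(i < n) (c i)%:R *: Pi i.

Definition pos_root (Phi : seq V) (Pi : 'I_n -> V) (a : V) : Prop :=
  a \in Phi /\ nonneg_comb Pi a.

Definition highest_root (Phi : seq V) (Pi : 'I_n -> V) (th : V) : Prop :=
  pos_root Phi Pi th /\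
  forall b, pos_root Phi Pi b -> nonneg_comb Pi (th - b).

Definition off_arr (Phi : seq V) (m : nat) (x : V) : Prop :=
  forall a (k : nat), a \in Phi -> (k <= m)%N -> dotv a x != k%:R.

(* Regions of A^m_Phi: connected components of the complement, i.e. the
   (nonempty) classes of points off the arrangement having the same position
   with respect to every hyperplane. *)
Definition region (Phi : seq V) (m : nat) (Rg : V -> Prop) : Prop :=
  exists x0, off_arr Phi m x0 /\
    forall y, Rg y <->
      (off_arr Phi m y /\
       forall a (k : nat), a \in Phi -> (k <= m)%N ->
         (dotv a y < k%:R) = (dotv a x0 < k%:R)).

Definition dominant (Phi : seq V) (Pi : 'I_n -> V) (Rg : V -> Prop) : Prop :=
  forall x, Rg x -> forall a, pos_root Phi Pi a -> 0 < dotv a x.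

Definition bounded (Rg : V -> Prop) : Prop :=
  exists M : R, forall x, Rg x -> dotv x x <= M.

(* The affine Weyl group W_a: group generated by the reflections in all
   H_{alpha,k}, alpha in Phi, k in Z (reflections are involutions, so finite
   products of them form the generated group). *)
Inductive in_Wa (Phi : seq V) : (V -> V) -> Prop :=
  | Wa_id : in_Wa Phi id
  | Wa_refl (a : V) (k : int) (w : V -> V) :
      a \in Phi -> in_Wa Phi w -> in_Wa Phi (aff_refl a k%:~R \o w).

Definition fund_alcove (Pi : 'I_n -> V) (th : V) (x : V) : Prop :=
  (forall i, 0 < dotv (Pi i) x) /\ dotv th x < 1.

Definition r_of (Pi : 'I_n -> V) (th : V) (w : V -> V) (a : V) (r : int) : Prop :=
  forall x, fund_alcove Pi th x -> r%:~R - 1 < dotv a (w x) < r%:~R.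

(* phi(R) : J_r = {alpha in Phi^+ : (alpha,x) < r on R}, 0 <= r <= m. *)
Definition chainJ (Phi : seq V) (Pi : 'I_n -> V) (Rg : V -> Prop) (r : nat)
  (a : V) : Prop :=
  pos_root Phi Pi a /\ forall x, Rg x -> dotv a x < r%:R.

Definition decomp_value (J : nat -> V -> Prop) (m : nat) (a : V) (v : nat) : Prop :=
  exists s : seq (V * nat),
    [/\ s != [::],
        a = \sum_(p <- s) p.1,
        (forall p, p \in s -> (p.2 <= m)%N /\ J p.2 p.1) &
        v = (\sum_(p <- s) p.2)%N].

Definition r_alpha (J : nat -> V -> Prop) (m : nat) (a : V) (v : nat) : Prop :=
  decomp_value J m a v /\ forall v', decomp_value J m a v' -> (v <= v')%N.

End RootSystems.

From HB Require Import structures.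
From mathcomp Require Import all_boot all_order all_algebra.
From mathcomp Require Import reals.
From mathcomp Require Import ring lra zify.
From Stdlib Require Import FunctionalExtensionality.
Import Order.TTheory GRing.Theory Num.Theory.
Local Open Scope ring_scope.
Set Implicit Arguments.
Unset Strict Implicit.
Unset Printing Implicit Defensive.

(* The alcove [wR A] (with [A] the fundamental alcove) lies in the strip
   [r - 1 < (a, x) < r], [r = r_a(phi(R))], for every positive root [a]. As
   [(a, .) < r_a] on [R], and [r_a <= k] as soon as [(a, .) < k] on [R], this
   strip is the lowest one meeting [R], and it lies on the same side as [R] of
   every hyperplane of the arrangement: so [wR A] lies in [R] and satisfies the
   separation property. Conversely an alcove [w A] in [R] with the separation
   property lies in the same strips as [wR A], so [wR^-1 w] maps [A] into itself.
   Writing elements of [W_a] as words in the simple affine reflections (the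
   reflection in a positive affine root is conjugate, by a simple reflection, to
   one of smaller height), such a word is trivial by the deletion argument: the
   root of its first letter turns negative along the word, and the exchange
   cancels two letters. *)

Section InnerProduct.
Variables (R : realType) (n : nat).
Notation V := 'rV[R]_n.
Implicit Types (u v w : V).

Lemma dotvC u v : dotv u v = dotv v u.
Proof. by apply: eq_bigr => i _; rewrite mulrC. Qed.

Lemma dotvDl u v w : dotv (u + v) w = dotv u w + dotv v w.
Proof. by rewrite /dotv -big_split; apply: eq_bigr => i _; rewrite mxE mulrDl. Qed.

Lemma dotvZl c u w : dotv (c *: u) w = c * dotv u w.
Proof. by rewrite /dotv mulr_sumr; apply: eq_bigr => i _; rewrite mxE mulrA. Qed.

Lemma dotvNl u w : dotv (- u) w = - dotv u w.
Proof. by rewrite -scaleN1r dotvZl mulN1r. Qed.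

Lemma dotvBl u v w : dotv (u - v) w = dotv u w - dotv v w.
Proof. by rewrite dotvDl dotvNl. Qed.

Lemma dotvZr c u w : dotv w (c *: u) = c * dotv w u.
Proof. by rewrite !(dotvC w) dotvZl. Qed.

Lemma dotvNr u w : dotv w (- u) = - dotv w u.
Proof. by rewrite !(dotvC w) dotvNl. Qed.

Lemma dotvBr u v w : dotv w (u - v) = dotv w u - dotv w v.
Proof. by rewrite !(dotvC w) dotvBl. Qed.

Lemma dotv_suml (I : Type) (r : seq I) (P : pred I) (F : I -> V) w :
  dotv (\sum_(i <- r | P i) F i) w = \sum_(i <- r | P i) dotv (F i) w.
Proof.
elim/big_rec2: _ => [|i y1 y2 _ <-]; last by rewrite dotvDl.
by rewrite /dotv big1 // => i _; rewrite mxE mul0r.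
Qed.

Lemma dotv_eq0 u : (dotv u u == 0) = (u == 0).
Proof.
apply/idP/idP => [|/eqP->]; last by rewrite /dotv big1 // => i _; rewrite mxE mul0r.
rewrite psumr_eq0 => [/allP u0|i _]; last by rewrite -expr2 sqr_ge0.
apply/eqP/rowP => i; rewrite mxE.
by have := u0 i (mem_index_enum i); rewrite /= -expr2 sqrf_eq0 => /eqP.
Qed.

Lemma dotv_gt0 u : u != 0 -> 0 < dotv u u.
Proof.
move=> u0; rewrite lt0r dotv_eq0 u0 /=.
by apply: sumr_ge0 => i _; rewrite -expr2 sqr_ge0.
Qed.

End InnerProduct.

Section AffineFunctionals.
Variables (R : realType) (n : nat).
Notation V := 'rV[R]_n.
Notation F := (V * R^o)%type.
Implicit Types (x a b : V) (f g : F).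

(* A pair [f = (a, k)] stands for the affine functional [x |-> (a, x) - k],
   whose zero set is the hyperplane [H_{a,k}]. *)
Definition aff_eval f x : R := dotv f.1 x - f.2.

Definition cartan a b := 2 * dotv a b / dotv b b.

Definition refl f := aff_refl f.1 f.2.

(* The functional [f \o refl g]. *)
Definition aff_reflect g f : F := f - cartan f.1 g.1 *: g.

Lemma aff_sum1 (I : Type) (r : seq I) (P : pred I) (G : I -> F) :
  (\sum_(i <- r | P i) G i).1 = \sum_(i <- r | P i) (G i).1.
Proof. by elim/big_rec2: _ => // i y1 y2 _ <-. Qed.

Lemma aff_sum2 (I : Type) (r : seq I) (P : pred I) (G : I -> F) :
  (\sum_(i <- r | P i) G i).2 = \sum_(i <- r | P i) (G i).2 :> R.
Proof. by elim/big_rec2: _ => // i y1 y2 _ <-. Qed.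

Lemma reflE f x : refl f x = x - (2 * aff_eval f x / dotv f.1 f.1) *: f.1.
Proof. by []. Qed.

Lemma aff_reflectE g f :
  aff_reflect g f = (f.1 - cartan f.1 g.1 *: g.1, f.2 - cartan f.1 g.1 * g.2 : R).
Proof. by []. Qed.

Lemma aff_eval_refl g f x : aff_eval f (refl g x) = aff_eval (aff_reflect g f) x.
Proof.
rewrite aff_reflectE /aff_eval /refl /aff_refl /cartan /=.
rewrite dotvBr dotvZr dotvBl dotvZl; ring.
Qed.

Lemma aff_evalN f x : aff_eval (- f) x = - aff_eval f x.
Proof. by rewrite /aff_eval /= dotvNl opprK opprB addrC. Qed.

Lemma refl_opp f : refl (- f) =1 refl f.
Proof.
move=> x; rewrite !reflE aff_evalN /= dotvNl dotvNr opprK.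
by apply/rowP => i; rewrite !mxE; ring.
Qed.

Lemma cartan_self a : dotv a a != 0 -> cartan a a = 2.
Proof. by move=> a_nz; rewrite /cartan mulfK. Qed.

Section NonDegenerate.
Variable g : F.
Hypothesis g_nz : dotv g.1 g.1 != 0.

Lemma reflK : involutive (refl g).
Proof.
move=> x; rewrite [refl g (refl g x)]reflE aff_eval_refl aff_reflectE.
rewrite (cartan_self g_nz) /aff_eval /refl /aff_refl /= dotvBl dotvZl.
by apply/rowP => i; rewrite !mxE; field.
Qed.

Lemma aff_reflectK : involutive (aff_reflect g).
Proof.
move=> f; rewrite {1}/aff_reflect.
have -> : cartan (aff_reflect g f).1 g.1 = - cartan f.1 g.1.
  by rewrite aff_reflectE /cartan /= dotvBl dotvZl; field.
by rewrite scaleNr opprK subrK.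
Qed.

Lemma aff_reflect_self : aff_reflect g g = - g.
Proof.
by rewrite /aff_reflect (cartan_self g_nz) scaler_nat mulr2n opprD addrA subrr sub0r.
Qed.

Lemma refl_aff_reflect f : refl (aff_reflect g f) =1 refl g \o refl f \o refl g.
Proof.
move=> x; have norm_eq : dotv (aff_reflect g f).1 (aff_reflect g f).1 = dotv f.1 f.1.
  rewrite aff_reflectE /cartan /= !(dotvBl, dotvBr, dotvZl, dotvZr) (dotvC g.1).
  by field.
have refl_lin y t a : refl g (y - t *: a) = refl g y - t *: (a - cartan a g.1 *: g.1).
  rewrite /refl /aff_refl /cartan dotvBr dotvZr (dotvC g.1 a).
  by apply/rowP => i; rewrite !mxE; ring.
by rewrite /= reflE norm_eq -aff_eval_refl [refl f _]reflE refl_lin reflK.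
Qed.

End NonDegenerate.

End AffineFunctionals.

Section IntegerStrips.
Variable R : realDomainType.
Implicit Types (v k : int) (s : R).

Lemma strip_ltr_int v k s : v%:~R - 1 < s < v%:~R -> (k%:~R < s) = (k < v).
Proof.
case/andP=> lo hi; apply/idP/idP => [k_lt|k_lt].
  by rewrite -(ltr_int R); apply: lt_trans k_lt hi.
have : k <= v - 1 by lia.
by rewrite -(ler_int R) intrB rmorph1 => k_le; apply: le_lt_trans k_le lo.
Qed.

Lemma strip_gtr_int v k s : v%:~R - 1 < s < v%:~R -> (s < k%:~R) = (v <= k).
Proof.
case/andP=> lo hi; apply/idP/idP => [k_gt|v_le].
  have : (v - 1)%:~R < k%:~R :> R by rewrite intrB rmorph1; apply: lt_trans lo k_gt.
  by rewrite ltr_int; lia.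
by apply: lt_le_trans hi _; rewrite ler_int.
Qed.

End IntegerStrips.

Section AffineWeylGroup.
Variables (R : realType) (n : nat) (Phi : seq 'rV[R]_n) (Pi : 'I_n -> 'rV[R]_n)
  (th : 'rV[R]_n).
Hypotheses (rsPhi : root_system Phi) (basePi : simple_system Phi Pi)
  (th_highest : highest_root Phi Pi th).
Notation V := 'rV[R]_n.
Notation F := (V * R^o)%type.
Implicit Types (x y a b : V) (f g : F) (l : 'I_n.+1) (s t : seq 'I_n.+1).

Lemma root_neq0 a : a \in Phi -> a != 0.
Proof. by case: rsPhi => Phi0 _ _ _ _ aPhi; apply: contraNneq Phi0 => <-. Qed.

Lemma root_dotv_neq0 a : a \in Phi -> dotv a a != 0.
Proof. by move=> aPhi; rewrite dotv_eq0 root_neq0. Qed.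

Lemma root_reflect a b : a \in Phi -> b \in Phi -> a - cartan a b *: b \in Phi.
Proof.
case: rsPhi => _ _ Phi_refl _ _ aPhi bPhi.
by have := Phi_refl b a bPhi aPhi; rewrite /aff_refl subr0 /cartan dotvC.
Qed.

Lemma rootN a : a \in Phi -> - a \in Phi.
Proof.
move=> aPhi; have := root_reflect aPhi aPhi.
by rewrite cartan_self ?root_dotv_neq0 // scaler_nat mulr2n opprD addrA subrr sub0r.
Qed.

Lemma cartan_int a b : a \in Phi -> b \in Phi -> exists z : int, cartan a b = z%:~R.
Proof.
case: rsPhi => _ _ _ Phi_int _ aPhi bPhi.
by have [z hz] := Phi_int b a bPhi aPhi; exists z; rewrite /cartan dotvC.
Qed.

Lemma simple_free (c : 'I_n -> R) : \sum_i c i *: Pi i = 0 -> forall i, c i = 0.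
Proof.
case: basePi => _ Pi_free _ c0 i.
have : (\row_j c j) *m (\matrix_j Pi j) = 0 *m (\matrix_j Pi j).
  rewrite mul0mx mulmx_sum_row -[RHS]c0; apply: eq_bigr => j _.
  by rewrite rowK mxE.
by move/(row_free_inj Pi_free)/rowP/(_ i); rewrite !mxE.
Qed.

Lemma pos_root_or_N a : a \in Phi -> pos_root Phi Pi a \/ pos_root Phi Pi (- a).
Proof.
move=> aPhi; case: basePi => _ _ /(_ a aPhi) [c [a_eq [c_ge0|c_le0]]].
  left; split => //; exists (fun i => `|c i|%N); rewrite a_eq.
  by apply: eq_bigr => i _; rewrite natr_absz ger0_norm.
right; split; first exact: rootN.
exists (fun i => `|c i|%N); rewrite a_eq -sumrN; apply: eq_bigr => i _.
by rewrite natr_absz ler0_norm // rmorphN scaleNr.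
Qed.

Lemma pos_rootN a : pos_root Phi Pi a -> ~ pos_root Phi Pi (- a).
Proof.
move=> [aPhi [c a_eq]] [_ [d Na_eq]].
have /simple_free cd0 : \sum_i ((c i + d i)%:R : R) *: Pi i = 0.
  under eq_bigr do rewrite natrD scalerDl.
  by rewrite big_split /= -a_eq -Na_eq subrr.
apply: (negP (root_neq0 aPhi)); rewrite a_eq big1 // => i _.
by have /eqP := cd0 i; rewrite pnatr_eq0 addn_eq0 => /andP[/eqP-> _]; rewrite scale0r.
Qed.

Lemma fund_alcove_pos_root_gt0 a x :
  fund_alcove Pi th x -> pos_root Phi Pi a -> 0 < dotv a x.
Proof.
move=> [Pi_gt0 _] [aPhi [c a_eq]].
have terms_ge0 i : 0 <= dotv ((c i)%:R *: Pi i) x by rewrite dotvZl mulr_ge0 // ltW.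
rewrite lt_def a_eq dotv_suml sumr_ge0 // andbT.
apply: contra_neq (root_neq0 aPhi) => /(psumr_eq0P (fun i _ => terms_ge0 i)) sum0.
rewrite a_eq big1 // => i _; have /eqP := sum0 i isT.
rewrite dotvZl mulf_eq0 pnatr_eq0 (gt_eqF (Pi_gt0 i)) orbF => /eqP->.
by rewrite scale0r.
Qed.

Lemma fund_alcove_pos_root_lt1 a x :
  fund_alcove Pi th x -> pos_root Phi Pi a -> dotv a x < 1.
Proof.
move=> [Pi_gt0 th_lt1] a_pos; have [_ /(_ a a_pos) [c th_eq]] := th_highest.
have : 0 <= dotv (th - a) x.
  by rewrite th_eq dotv_suml sumr_ge0 // => i _; rewrite dotvZl mulr_ge0 // ltW.
rewrite dotvBl; lra.
Qed.

(* A point with [(Pi i, y) = 1] for all [i], scaled down below the wall of [th]. *)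
Lemma fund_alcove_nonempty : exists x, fund_alcove Pi th x.
Proof.
case: basePi => _ + _; rewrite row_free_unit => Pi_unit.
set M := \matrix_i Pi i; set yc : 'cV[R]_n := invmx M *m const_mx 1.
have Pi_y i : dotv (Pi i) yc^T = 1.
  have : (M *m yc) i 0 = 1 by rewrite mulKVmx // mxE.
  by rewrite mxE => <-; apply: eq_bigr => j _; rewrite !mxE.
set e : R := (1 + `|dotv th yc^T|)^-1.
have e_gt0 : 0 < e by rewrite invr_gt0 ltr_pwDl.
exists (e *: yc^T); split => [i|]; first by rewrite dotvZr Pi_y mulr1.
rewrite dotvZr /e mulrC ltr_pdivrMr ?ltr_pwDl // mul1r.
by apply: le_lt_trans (ler_norm _) _; rewrite ltrDr.
Qed.

Definition aff_root f := f.1 \in Phi /\ exists z : int, f.2 = z%:~R :> R.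

(* The affine roots that are positive on the fundamental alcove. *)
Definition pos_aff_root f :=
  (pos_root Phi Pi f.1 /\ (f.2 : R) <= 0) \/
  (pos_root Phi Pi (- f.1) /\ (f.2 : R) <= -1).

Definition neg_aff_root f := pos_aff_root (- f).

(* Index [0] is the affine simple root [x |-> 1 - (th, x)]. *)
Definition simple_aff l : F :=
  if unlift ord0 l is Some i then (Pi i, 0) else (- th, -1).

Lemma simple_aff_lift i : simple_aff (lift ord0 i) = (Pi i, 0).
Proof. by rewrite /simple_aff liftK. Qed.

Lemma simple_aff0 : simple_aff ord0 = (- th, -1).
Proof. by rewrite /simple_aff unlift_none. Qed.

Lemma sum_simple_affE (mu : 'I_n.+1 -> R) :
  \sum_l mu l *: simple_aff l =
  (\sum_i mu (lift ord0 i) *: Pi i - mu ord0 *: th, - mu ord0 : R).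
Proof.
apply: injective_projections; rewrite ?aff_sum1 ?aff_sum2 big_ord_recl simple_aff0 /=.
  by under eq_bigr do rewrite simple_aff_lift; rewrite scalerN addrC.
rewrite big1 ?addr0 => [|i _]; rewrite ?simple_aff_lift /=.
  exact: mulrN1.
by rewrite scaler0.
Qed.

Lemma simple_aff_free (mu : 'I_n.+1 -> R) :
  \sum_l mu l *: simple_aff l = 0 -> forall l, mu l = 0.
Proof.
move=> sum0; have /eqP := congr1 snd sum0.
rewrite sum_simple_affE /= oppr_eq0 => /eqP mu0.
have := congr1 fst sum0.
rewrite sum_simple_affE /= mu0 scale0r subr0 => /simple_free Pi0.
by move=> l; case: (unliftP ord0 l) => [i ->|->].
Qed.

Lemma simple_aff_coord_inj (mu nu : 'I_n.+1 -> R) :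
  \sum_l mu l *: simple_aff l = \sum_l nu l *: simple_aff l -> mu =1 nu.
Proof.
move=> /eqP; rewrite -subr_eq0 -sumrB => /eqP.
under eq_bigr do rewrite -scalerBl.
by move/simple_aff_free => sub0 l; apply/eqP; rewrite -subr_eq0 sub0.
Qed.

Lemma aff_rootN f : aff_root f -> aff_root (- f).
Proof.
case=> fPhi [z f2]; split; first exact: rootN.
by exists (- z); rewrite /= f2 rmorphN.
Qed.

Lemma aff_root_reflect g f : aff_root g -> aff_root f -> aff_root (aff_reflect g f).
Proof.
case=> gPhi [zg g2] [fPhi [zf f2]]; rewrite aff_reflectE.
split; first exact: root_reflect.
have [c ->] := cartan_int fPhi gPhi.
by exists (zf - c * zg); rewrite /= f2 g2 rmorphB rmorphM.
Qed.

Lemma aff_root_pos_or_neg f : aff_root f -> pos_aff_root f \/ neg_aff_root f.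
Proof.
case=> fPhi [z f2]; rewrite /neg_aff_root /pos_aff_root /= opprK f2.
have le0 (u : int) : (u%:~R <= 0 :> R) = (u <= 0) by rewrite -(ler_int R).
have leN1 (u : int) : (u%:~R <= -1 :> R) = (u <= -1).
  by rewrite -(ler_int R) rmorphN rmorph1.
rewrite -!rmorphN !(le0, leN1).
case: (pos_root_or_N fPhi) => a_pos.
  by case: (lerP z 0) => z0; [left; left | right; right; split => //; lia].
by case: (lerP z (-1)) => z1; [left; right | right; left; split => //; lia].
Qed.

Lemma pos_neg_aff_root_false f : pos_aff_root f -> neg_aff_root f -> False.
Proof.
rewrite /neg_aff_root /pos_aff_root /= opprK.
case=> [[f_pos f2]|[Nf_pos f2]] [[Nf_pos' f2']|[f_pos' f2']];
  by [apply: pos_rootN f_pos _ | apply: pos_rootN f_pos' _ | lra].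
Qed.

Lemma pos_aff_root_gt0 f x :
  pos_aff_root f -> fund_alcove Pi th x -> 0 < aff_eval f x.
Proof.
rewrite /aff_eval => -[[f_pos f2]|[Nf_pos f2]] x_alc.
  by have := fund_alcove_pos_root_gt0 x_alc f_pos; lra.
by have := fund_alcove_pos_root_lt1 x_alc Nf_pos; rewrite dotvNl; lra.
Qed.

Lemma simple_aff_root l : aff_root (simple_aff l).
Proof.
have [[thPhi _] _] := th_highest; case: basePi => Pi_Phi _ _.
case: (unliftP ord0 l) => [i|] ->;
  rewrite ?simple_aff_lift ?simple_aff0; split => //=.
- by exists 0.
- exact: rootN.
- by exists (-1); rewrite rmorphN rmorph1.
Qed.

Lemma simple_aff_dotv_neq0 l : dotv (simple_aff l).1 (simple_aff l).1 != 0.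
Proof. exact: root_dotv_neq0 (simple_aff_root l).1. Qed.

Lemma simple_aff_pos l : pos_aff_root (simple_aff l).
Proof.
case: (unliftP ord0 l) => [i|] ->;
  rewrite ?simple_aff_lift ?simple_aff0 /pos_aff_root /=.
  left; split => //; split; first by case: basePi.
  exists (fun j => (j == i) : nat); rewrite (bigD1 i) //= eqxx scale1r big1 ?addr0 //.
  by move=> j /negPf->; rewrite scale0r.
by right; rewrite opprK; split => //; case: th_highest.
Qed.

Lemma fund_alcoveE x :
  fund_alcove Pi th x <-> forall l, 0 < aff_eval (simple_aff l) x.
Proof.
rewrite /aff_eval; split => [[Pi_gt0 th_lt1] l|simple_gt0].
  case: (unliftP ord0 l) => [i|] ->; rewrite ?simple_aff_lift ?simple_aff0 /=.
    by rewrite subr0.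
  by rewrite dotvNl; lra.
split => [i|].
  by have := simple_gt0 (lift ord0 i); rewrite simple_aff_lift /= subr0.
by have := simple_gt0 ord0; rewrite simple_aff0 /= dotvNl; lra.
Qed.

Lemma pos_aff_root_comb f : aff_root f -> pos_aff_root f ->
  exists m : 'I_n.+1 -> nat, f = \sum_l (m l)%:R *: simple_aff l.
Proof.
case: f => a k [/= aPhi [z ->]] f_pos.
have [[_ [t th_eq]] th_top] := th_highest.
have combD (c : 'I_n -> nat) (k' : nat) :
    \sum_i (c i + k' * t i)%:R *: Pi i = \sum_i (c i)%:R *: Pi i + k'%:R *: th.
  rewrite th_eq scaler_sumr -big_split; apply: eq_bigr => i _.
  by rewrite natrD natrM scalerDl scalerA.
suff [z_le0 [e a_eq]] : z <= 0 /\
    exists e : 'I_n -> nat, a + (`|z|%N)%:R *: th = \sum_i (e i)%:R *: Pi i.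
  exists (fun l => if unlift ord0 l is Some i then e i else `|z|%N).
  rewrite sum_simple_affE unlift_none; under eq_bigr do rewrite liftK.
  by rewrite -a_eq addrK natr_absz ler0_norm // rmorphN opprK.
case: f_pos => /= [[[_ [c a_eq]] z_le0] | [Na_pos z_le]].
  split; first by rewrite -(ler_int R).
  by exists (fun i => c i + `|z| * t i)%N; rewrite combD a_eq.
have z_le1 : z <= -1 by rewrite -(ler_int R) rmorphN rmorph1.
split; first lia.
have [d d_eq] := th_top _ Na_pos.
exists (fun i => d i + (`|z| - 1) * t i)%N; rewrite combD -d_eq natrB; last by lia.
by rewrite scalerBl scale1r opprK addrAC addrCA subrr addr0 addrC.
Qed.

Lemma aff_reflect_simple_sum l (mu : 'I_n.+1 -> R) f :
  f = \sum_l' mu l' *: simple_aff l' ->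
  aff_reflect (simple_aff l) f =
  \sum_l' (mu l' - cartan f.1 (simple_aff l).1 * (l' == l)%:R) *: simple_aff l'.
Proof.
move=> f_eq; rewrite {1}/aff_reflect {1}f_eq.
under [RHS]eq_bigr do rewrite scalerBl -scalerA.
rewrite sumrB; congr (_ - _); rewrite -scaler_sumr (bigD1 l) //= eqxx scale1r.
by rewrite big1 ?addr0 // => l' /negPf->; rewrite scale0r.
Qed.

Lemma simple_reflect_pos_neg l f : aff_root f -> pos_aff_root f ->
  neg_aff_root (aff_reflect (simple_aff l) f) -> f = simple_aff l.
Proof.
move=> f_root f_pos f'_neg.
have [m f_eq] := pos_aff_root_comb f_root f_pos.
have f'_root := aff_rootN (aff_root_reflect (simple_aff_root l) f_root).
have [m' /eqP] := pos_aff_root_comb f'_root f'_neg.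
rewrite eqr_oppLR (aff_reflect_simple_sum l f_eq) -sumrN => /eqP.
under [RHS]eq_bigr do rewrite -scaleNr.
move=> /simple_aff_coord_inj coord.
have m0 l' : l' != l -> m l' = 0%N.
  move=> /negPf l'l; have /eqP := coord l'; rewrite l'l mulr0 subr0 -addr_eq0.
  by rewrite -natrD pnatr_eq0 addn_eq0 => /andP[/eqP].
have f_l : f = (m l)%:R *: simple_aff l.
  by rewrite f_eq (bigD1 l) //= big1 ?addr0 // => l' /m0->; rewrite scale0r.
have [[gPhi _] [fPhi _]] := (simple_aff_root l, f_root).
have f1 : f.1 = (m l)%:R *: (simple_aff l).1 by rewrite {1}f_l.
case: rsPhi => _ _ _ _ /(_ _ (m l)%:R gPhi); rewrite -f1 => /(_ fPhi) [ml1|ml_N1].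
  by rewrite f_l ml1 scale1r.
by have : (0 : R) <= (m l)%:R by []; rewrite ml_N1 oppr_ge0 ler10.
Qed.

Definition sref l := refl (simple_aff l).

Definition word_act s x := foldr sref x s.

Definition word_pull s f := foldl (fun f l => aff_reflect (simple_aff l) f) f s.

Lemma aff_eval_word_pull s f x : aff_eval (word_pull s f) x = aff_eval f (word_act s x).
Proof. by elim: s f => [|l s IH] f //=; rewrite IH -aff_eval_refl. Qed.

Lemma aff_root_word_pull s f : aff_root f -> aff_root (word_pull s f).
Proof.
by elim: s f => [|l s IH] f //= f_root; apply/IH/(aff_root_reflect (simple_aff_root l)).
Qed.

Lemma word_act_cat s t x : word_act (s ++ t) x = word_act s (word_act t x).
Proof. exact: foldr_cat. Qed.

Lemma srefK l : involutive (sref l).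
Proof. exact/reflK/simple_aff_dotv_neq0. Qed.

Lemma word_actK s : cancel (word_act s) (word_act (rev s)).
Proof.
elim: s => [|l s IH] x //=.
by rewrite rev_cons -cats1 word_act_cat /= srefK IH.
Qed.

Lemma word_act_revK s : cancel (word_act (rev s)) (word_act s).
Proof. by have := word_actK (rev s); rewrite revK. Qed.

Lemma exists_simple_acute f (m : 'I_n.+1 -> nat) : f.1 != 0 ->
  f = \sum_l (m l)%:R *: simple_aff l -> exists l, 0 < dotv f.1 (simple_aff l).1.
Proof.
move=> f1_neq0 f_eq.
have [l l_acute|not_acute] := pickP (fun l => 0 < dotv f.1 (simple_aff l).1).
  by exists l.
have := dotv_gt0 f1_neq0; rewrite {2}f_eq aff_sum1 dotvC dotv_suml ltNge => /negP[].
apply: sumr_le0 => l _; rewrite /= dotvZl (dotvC _ f.1) mulr_ge0_le0 //.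
by rewrite leNgt not_acute.
Qed.

Lemma refl_pos_aff_root_word N f (m : 'I_n.+1 -> nat) :
  aff_root f -> pos_aff_root f -> f = \sum_l (m l)%:R *: simple_aff l ->
  (\sum_l m l < N)%N -> exists s, refl f =1 word_act s.
Proof.
elim: N f m => // N IH f m f_root f_pos f_eq height_lt.
have [l acute] := exists_simple_acute (root_neq0 f_root.1) f_eq.
set f' := aff_reflect (simple_aff l) f.
have f'_root : aff_root f' := aff_root_reflect (simple_aff_root l) f_root.
have [f'_pos|f'_neg] := aff_root_pos_or_neg f'_root; last first.
  by exists [:: l]; rewrite (simple_reflect_pos_neg f_root f_pos f'_neg).
have [m' f'_eq] := pos_aff_root_comb f'_root f'_pos.
have coord :=
  simple_aff_coord_inj (etrans (esym f'_eq) (aff_reflect_simple_sum l f_eq)).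
have [s refl_f'] : exists s, refl f' =1 word_act s.
  apply: (IH f' m') => //; rewrite -ltnS; apply: leq_trans height_lt.
  rewrite ltnS -(ltr_nat R) !natr_sum (eq_bigr _ (fun l' _ => coord l')) sumrB.
  have delta_sum : \sum_l' ((l' == l)%:R : R) = 1.
    by rewrite (bigD1 l) //= eqxx big1 ?addr0 // => l' /negPf->.
  rewrite -mulr_sumr delta_sum mulr1 ltrBlDr ltrDl /cartan.
  rewrite divr_gt0 ?mulr_gt0 ?dotv_gt0 //.
  by rewrite -dotv_eq0 simple_aff_dotv_neq0.
exists (l :: s ++ [:: l]) => x.
have g_nz := simple_aff_dotv_neq0 l.
rewrite -[f](aff_reflectK g_nz) (refl_aff_reflect g_nz) /=.
by rewrite refl_f' word_act_cat.
Qed.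

Lemma refl_aff_root_word f : aff_root f -> exists s, refl f =1 word_act s.
Proof.
move=> f_root; have [f_pos|f_neg] := aff_root_pos_or_neg f_root.
  have [m f_eq] := pos_aff_root_comb f_root f_pos.
  exact: refl_pos_aff_root_word f_root f_pos f_eq (ltnSn _).
have [m Nf_eq] := pos_aff_root_comb (aff_rootN f_root) f_neg.
have [s refl_Nf] := refl_pos_aff_root_word (aff_rootN f_root) f_neg Nf_eq (ltnSn _).
by exists s => x; rewrite -refl_opp.
Qed.

Lemma Wa_word w : in_Wa Phi w -> exists s, w =1 word_act s.
Proof.
elim=> [|a k w' aPhi _ [s w'_eq]]; first by exists [::].
have [|s1 refl_eq] := @refl_aff_root_word (a, k%:~R); first by split => //; exists k.
by exists (s1 ++ s) => x; rewrite word_act_cat -w'_eq -refl_eq.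
Qed.

Lemma word_pull_sign_change t f : aff_root f -> pos_aff_root f ->
  neg_aff_root (word_pull t f) ->
  exists t1 l t2, t = t1 ++ l :: t2 /\ word_pull t1 f = simple_aff l.
Proof.
elim: t f => [|l t IH] f f_root f_pos /= t_neg.
  by case: (pos_neg_aff_root_false f_pos t_neg).
have f'_root := aff_root_reflect (simple_aff_root l) f_root.
have [f'_pos|f'_neg] := aff_root_pos_or_neg f'_root.
  have [t1 [l' [t2 [-> pull_eq]]]] := IH _ f'_root f'_pos t_neg.
  by exists (l :: t1), l', t2.
by exists [::], l, t; split => //; apply: simple_reflect_pos_neg f'_neg.
Qed.

Lemma refl_word_conj t f l : word_pull t f = simple_aff l ->
  forall y, refl f (word_act t y) = word_act t (sref l y).
Proof.
elim: t f => [|l' t IH] f /= pull_eq y; first by rewrite pull_eq.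
have g_nz := simple_aff_dotv_neq0 l'.
by rewrite -(IH _ pull_eq y) (refl_aff_reflect g_nz) /= srefK.
Qed.

(* The deletion condition: a word fixing the fundamental alcove can be
   shortened by two letters without changing its action. *)
Lemma word_act_fund_alcove_id s :
  (forall x, fund_alcove Pi th x -> fund_alcove Pi th (word_act s x)) ->
  word_act s =1 id.
Proof.
have [N] := ubnP (size s); elim: N s => // N IH [|l1 rest] // size_lt stable.
have [z z_alc] := fund_alcove_nonempty.
set f := word_pull rest (simple_aff l1).
have f_root : aff_root f := aff_root_word_pull rest (simple_aff_root l1).
have f_neg : neg_aff_root f.
  have [f_pos|//] := aff_root_pos_or_neg f_root.
  have := pos_aff_root_gt0 f_pos z_alc; rewrite aff_eval_word_pull.
  have /fund_alcoveE/(_ l1) := stable z z_alc; rewrite /= /sref aff_eval_refl.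
  rewrite aff_reflect_self ?simple_aff_dotv_neq0 // aff_evalN oppr_gt0.
  by move=> /lt_trans lt_f /lt_f; rewrite ltxx.
have [t1 [l [t2 [rest_eq pull_eq]]]] :=
  word_pull_sign_change (simple_aff_root l1) (simple_aff_pos l1) f_neg.
have shorten y : sref l1 (word_act rest y) = word_act (t1 ++ t2) y.
  by rewrite rest_eq !word_act_cat /= [sref l1 _](refl_word_conj pull_eq) srefK.
move=> x; rewrite /= shorten; apply: IH => [|y y_alc].
  by move: size_lt; rewrite rest_eq /= !size_cat /=; lia.
by rewrite -shorten; apply: stable.
Qed.

Lemma r_ofN w a v : r_of Pi th w a v -> r_of Pi th w (- a) (1 - v).
Proof.
move=> a_strip x /a_strip /andP[lo hi].
by rewrite dotvNl intrB rmorph1; apply/andP; split; lra.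
Qed.

Lemma Wa_eq_of_r_of w w' : in_Wa Phi w -> in_Wa Phi w' ->
  (forall a, pos_root Phi Pi a -> exists v, r_of Pi th w a v /\ r_of Pi th w' a v) ->
  w = w'.
Proof.
move=> w_Wa w'_Wa same_r.
have same_r_root a : a \in Phi -> exists v, r_of Pi th w a v /\ r_of Pi th w' a v.
  move=> aPhi; have [/same_r //|/same_r [v [r_w r_w']]] := pos_root_or_N aPhi.
  by exists (1 - v); rewrite -[a]opprK; split; apply: r_ofN.
have [[s w_eq] [s' w'_eq]] := (Wa_word w_Wa, Wa_word w'_Wa).
have [z z_alc] := fund_alcove_nonempty.
(* [rev s' ++ s] represents [w'^-1 w]; it keeps the alcove on the positive side
   of every simple wall because an affine root, having an integral constant,
   has the same sign on two alcoves lying in the same strips. *)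
have stable y : fund_alcove Pi th y ->
    fund_alcove Pi th (word_act (rev s' ++ s) y).
  move=> y_alc; apply/fund_alcoveE => l; rewrite word_act_cat -w_eq.
  rewrite -aff_eval_word_pull.
  have [fPhi [k f2]] := aff_root_word_pull (rev s') (simple_aff_root l).
  have [v [r_w r_w']] := same_r_root _ fPhi.
  have f_pos : 0 < aff_eval (word_pull (rev s') (simple_aff l)) (w' z).
    by rewrite aff_eval_word_pull w'_eq word_actK; move/fund_alcoveE: z_alc.
  move: f_pos; rewrite /aff_eval f2 !subr_gt0 (strip_ltr_int _ (r_w' z z_alc)).
  by rewrite (strip_ltr_int _ (r_w y y_alc)).
apply: functional_extensionality => x; have u_id := word_act_fund_alcove_id stable.
by rewrite w'_eq -[RHS](congr1 (word_act s') (u_id x)) word_act_cat word_act_revK w_eq.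
Qed.

End AffineWeylGroup.

Section MinimalAlcove.
Variables (R : realType) (n : nat) (Phi : seq 'rV[R]_n) (Pi : 'I_n -> 'rV[R]_n)
  (th : 'rV[R]_n) (m : nat) (Rg : 'rV[R]_n -> Prop).
Notation V := 'rV[R]_n.
Notation J := (chainJ Phi Pi Rg).
Implicit Types (x y a : V) (w : V -> V) (v k : nat).

Lemma decomp_value_ub a v x : decomp_value J m a v -> Rg x -> dotv a x < v%:R.
Proof.
move=> [s [s_nil -> s_J ->]] Rx; rewrite dotv_suml natr_sum !big_seq.
apply: ltr_sum => [|p /s_J[_ [_ p_lt]]]; last exact: p_lt.
by case: s s_nil {s_J} => // p s _; apply/hasP; exists p; rewrite mem_head.
Qed.

Lemma r_alpha_le_chain a k v : (k <= m)%N -> J k a -> r_alpha J m a v -> (v <= k)%N.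
Proof.
move=> k_le a_J [_ v_min]; apply: v_min; exists [:: (a, k)].
by split; rewrite ?big_seq1 // => p; rewrite mem_seq1 => /eqP->.
Qed.

Definition minimal_alcove w :=
  (forall x, fund_alcove Pi th x -> Rg (w x)) /\
  (forall a (r : int), pos_root Phi Pi a ->
     (exists2 x, Rg x & r%:~R < dotv a x) ->
     forall x, fund_alcove Pi th x -> r%:~R < dotv a (w x)).

Hypotheses (rsPhi : root_system Phi) (basePi : simple_system Phi Pi)
  (regRg : region Phi m Rg) (domRg : dominant Phi Pi Rg).

Lemma region_same_side a k y y' : a \in Phi -> (k <= m)%N -> Rg y -> Rg y' ->
  (dotv a y < k%:R) = (dotv a y' < k%:R).
Proof.
move=> aPhi k_le Ry Ry'; have [x0 [_ Rg_iff]] := regRg.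
have [[_ y_side] [_ y'_side]] := (proj1 (Rg_iff y) Ry, proj1 (Rg_iff y') Ry').
by rewrite y_side // y'_side.
Qed.

Lemma r_alpha_region_lt a k v y : pos_root Phi Pi a -> (k <= m)%N ->
  r_alpha J m a v -> Rg y -> (dotv a y < k%:R) = (v <= k)%N.
Proof.
move=> a_pos k_le a_v Ry; apply/idP/idP => [y_lt|v_le].
  apply: (r_alpha_le_chain k_le _ a_v); split => // y' Ry'.
  by rewrite (region_same_side a_pos.1 k_le Ry' Ry).
by apply: lt_le_trans (decomp_value_ub a_v.1 Ry) _; rewrite ler_nat.
Qed.

Lemma r_alpha_gt0 a v : pos_root Phi Pi a -> r_alpha J m a v -> (0 < v)%N.
Proof.
have [x0 [off0 Rg_iff]] := regRg; have Rx0 : Rg x0 by apply/Rg_iff.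
move=> a_pos a_v; have := decomp_value_ub a_v.1 Rx0; have := domRg Rx0 a_pos.
by rewrite -(ltr_nat R); apply: lt_trans.
Qed.

Variable wR : V -> V.
Hypothesis r_wR : forall a, pos_root Phi Pi a ->
  exists v : nat, r_alpha J m a v /\ r_of Pi th wR a v%:Z.

Lemma wR_pos_root_gt0 a x :
  fund_alcove Pi th x -> pos_root Phi Pi a -> 0 < dotv a (wR x).
Proof.
move=> x_alc a_pos; have [v [a_v r_v]] := r_wR a_pos.
have /andP[lo _] := r_v x x_alc; apply: le_lt_trans lo.
by rewrite subr_ge0 -pmulrn ler1n (r_alpha_gt0 a_pos a_v).
Qed.

Lemma wR_region_side a k x y :
  a \in Phi -> (k <= m)%N -> fund_alcove Pi th x -> Rg y ->
  dotv a (wR x) != k%:R /\ (dotv a (wR x) < k%:R) = (dotv a y < k%:R).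
Proof.
move=> aPhi k_le x_alc Ry.
have [a_pos|Na_pos] := pos_root_or_N rsPhi basePi aPhi; last first.
  have := wR_pos_root_gt0 x_alc Na_pos; have := domRg Ry Na_pos.
  rewrite !dotvNl !oppr_gt0 => y_lt0 wx_lt0; have k_ge0 : (0 : R) <= k%:R by [].
  have [wx_lt y_lt] := (lt_le_trans wx_lt0 k_ge0, lt_le_trans y_lt0 k_ge0).
  by rewrite wx_lt y_lt lt_eqF.
have [v [a_v r_v]] := r_wR a_pos; have strip := r_v x x_alc.
have := strip_gtr_int k strip; have := strip_ltr_int k strip.
rewrite -!pmulrn ltz_nat lez_nat (r_alpha_region_lt a_pos k_le a_v Ry) => gt_k lt_k.
split; last by rewrite lt_k.
apply/eqP => wx_k; move: gt_k lt_k; rewrite wx_k !ltxx => /esym/negbT.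
by rewrite -leqNgt => ->.
Qed.

Lemma minimal_alcove_wR : minimal_alcove wR.
Proof.
have [x0 [off0 Rg_iff]] := regRg; have Rx0 : Rg x0 by apply/Rg_iff.
split => [x x_alc|a r a_pos [y Ry r_lt] x x_alc].
  by apply/Rg_iff; split => [a k aPhi k_le|a k aPhi k_le];
     have [] := wR_region_side aPhi k_le x_alc Rx0.
have [v [a_v r_v]] := r_wR a_pos.
rewrite (strip_ltr_int r (r_v x x_alc)) -(ltr_int R).
exact: lt_trans r_lt (decomp_value_ub a_v.1 Ry).
Qed.

Lemma minimal_alcove_r_of w : minimal_alcove w -> forall a, pos_root Phi Pi a ->
  exists r : int, r_of Pi th w a r /\ r_of Pi th wR a r.
Proof.
move=> [w_Rg w_sep] a a_pos; have [v [a_v r_v]] := r_wR a_pos.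
have [z z_alc] := fund_alcove_nonempty th basePi.
have below : exists2 y, Rg y & (v%:Z - 1)%:~R < dotv a y.
  exists (wR z); first exact: minimal_alcove_wR.1.
  by rewrite intrB rmorph1; have /andP[] := r_v z z_alc.
exists v%:Z; split => // x x_alc; apply/andP; split.
  by have := w_sep a _ a_pos below x x_alc; rewrite intrB rmorph1.
exact: decomp_value_ub a_v.1 (w_Rg x x_alc).
Qed.

End MinimalAlcove.

Unset Implicit Arguments.
Theorem proposition3p7 (R : realType) (n : nat) (Phi : seq 'rV[R]_n)
  (Pi : 'I_n -> 'rV[R]_n) (th : 'rV[R]_n) (m : nat) (Rg : 'rV[R]_n -> Prop)
  (wR : 'rV[R]_n -> 'rV[R]_n) :
  root_system Phi -> irreducible_rs Phi -> simple_system Phi Pi ->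
  highest_root Phi Pi th -> (1 <= m)%N ->
  region Phi m Rg -> dominant Phi Pi Rg -> bounded Rg ->
  in_Wa Phi wR ->
  (forall a, pos_root Phi Pi a ->
     exists v : nat, r_alpha (chainJ Phi Pi Rg) m a v /\ r_of Pi th wR a v%:Z) ->
  let P := fun w : 'rV[R]_n -> 'rV[R]_n =>
    (forall x, fund_alcove Pi th x -> Rg (w x)) /\
    (forall a (r : int), pos_root Phi Pi a ->
       (exists2 x, Rg x & r%:~R < dotv a x) ->
       forall x, fund_alcove Pi th x -> r%:~R < dotv a (w x)) in
  P wR /\ (forall w, in_Wa Phi w -> P w -> w = wR).
Proof.
move=> rsPhi _ basePi th_highest _ regRg domRg _ wR_Wa r_wR P; rewrite /P.
have wR_min := minimal_alcove_wR rsPhi basePi regRg domRg r_wR.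
split=> [//|w w_Wa w_min].
apply: (Wa_eq_of_r_of rsPhi basePi th_highest w_Wa wR_Wa).
exact: (minimal_alcove_r_of rsPhi basePi regRg domRg r_wR w_min).
Qed.
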